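(* Let $p_1,\dots,p_4\in\mathbb R^2$ be in general position. For $i\ne j$, define $$w_{ij}=\frac{1}{\det(p_i,p_j,p_k)\det(p_i,p_j,p_l)},$$ where $\{k,l\}=\{1,2,3,4\}\setminus\{i,j\}$, and define $\alpha_i=\sum_{j\ne i}w_{ij}|p_i-p_j|$. Then the $w_{ij}$ and $\alpha_i$ form a stress of the complete marked graph on the four points, with the following signs: - $w_{ij}>0$ if $p_ip_j$ is an edge of the boundary of $\operatorname{conv}\{p_1,\dots,p_4\}$, and $w_{ij}<0$ otherwise; - $\alpha_i>0$ if $p_i$ is a vertex of $\operatorname{conv}\{p_1,\dots,p_4\}$, and $\alpha_i<0$ if $p_i$ lies in its interior.
   Context: For $x,y,z\in\mathbb R^2$, $\det(x,y,z)$ is the determinant of the $3\times3$ matrix with columns $(x,1),(y,1),(z,1)$, i.e. twice the signed area of the triangle $xyz$. General position means no three of the points are collinear. A stress on a marked graph with edge set $E$ and marked vertex set $V$ is an assignment of scalars $w_{ij}$ ($ij\in E$) and $\alpha_i$ ($i\in V$) such that, for all $(v,t)\in(\mathbb R^2)^4\times\mathbb R^4$, $$\sum_{ij\in E}w_{ij}\big(\langle p_i-p_j,v_i-v_j\rangle-|p_i-p_j|(t_i+t_j)\big)+\sum_{i\in V}\alpha_it_i=0.$$ *)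

From mathcomp Require Import all_boot all_order all_algebra.
From mathcomp Require Import reals.
Set Implicit Arguments. Unset Strict Implicit. Unset Printing Implicit Defensive.
Import Order.TTheory GRing.Theory Num.Theory.
Local Open Scope ring_scope.

Definition pt (R : realType) := (R * R)%type.

Section Defs.
Variable R : realType.

(* det(x,y,z): determinant of the 3x3 matrix with columns (x,1),(y,1),(z,1). *)
Definition det3 (x y z : pt R) : R :=
  \det (\matrix_(a < 3, b < 3)
          (let q := nth x [:: x; y; z] b in
           nth 1 [:: q.1; q.2; 1] a)).

Definition dot (x y : pt R) : R := x.1 * y.1 + x.2 * y.2.
Definition psub (x y : pt R) : pt R := (x.1 - y.1, x.2 - y.2).
Definition enorm (x : pt R) : R := Num.sqrt (dot x x).
Definition dist (x y : pt R) : R := enorm (psub x y).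

Definition general_position n (p : 'I_n -> pt R) : Prop :=
  forall i j k : 'I_n, i != j -> j != k -> i != k -> det3 (p i) (p j) (p k) != 0.

(* Stress on a marked graph with edge set E (each edge listed once, as an
   ordered pair) and marked vertex set V. *)
Definition is_stress n (p : 'I_n -> pt R) (E : {set 'I_n * 'I_n})
    (V : {set 'I_n}) (w : 'I_n -> 'I_n -> R) (alpha : 'I_n -> R) : Prop :=
  forall (v : 'I_n -> pt R) (t : 'I_n -> R),
    \sum_(e in E) w e.1 e.2 *
        (dot (psub (p e.1) (p e.2)) (psub (v e.1) (v e.2))
         - enorm (psub (p e.1) (p e.2)) * (t e.1 + t e.2))
    + \sum_(i in V) alpha i * t i = 0.

Definition complete_edges n : {set 'I_n * 'I_n} := [set e : 'I_n * 'I_n | (e.1 < e.2)%N].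

Definition conv n (p : 'I_n -> pt R) (x : pt R) : Prop :=
  exists lam : 'I_n -> R, (forall k, 0 <= lam k) /\ \sum_k lam k = 1 /\
    x = (\sum_k lam k * (p k).1, \sum_k lam k * (p k).2).

Definition segment (a b x : pt R) : Prop :=
  exists s : R, 0 <= s <= 1 /\ x = ((1 - s) * a.1 + s * b.1, (1 - s) * a.2 + s * b.2).

Definition interior (S : pt R -> Prop) (x : pt R) : Prop :=
  exists e : R, 0 < e /\ forall y, dist x y < e -> S y.
Definition closure (S : pt R -> Prop) (x : pt R) : Prop :=
  forall e : R, 0 < e -> exists y, S y /\ dist x y < e.
Definition boundary (S : pt R -> Prop) (x : pt R) : Prop :=
  closure S x /\ ~ interior S x.

Definition hull_edge n (p : 'I_n -> pt R) (i j : 'I_n) : Prop :=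
  forall x, segment (p i) (p j) x -> boundary (conv p) x.

Definition extreme_point (S : pt R -> Prop) (x : pt R) : Prop :=
  S x /\ forall a b (s : R), S a -> S b -> 0 < s < 1 ->
    x = ((1 - s) * a.1 + s * b.1, (1 - s) * a.2 + s * b.2) -> a = b.

Definition wK4 (p : 'I_4 -> pt R) (i j : 'I_4) : R :=
  (\prod_(k : 'I_4 | (k != i) && (k != j)) det3 (p i) (p j) (p k))^-1.

Definition alphaK4 (p : 'I_4 -> pt R) (i : 'I_4) : R :=
  \sum_(j : 'I_4 | j != i) wK4 p i j * dist (p i) (p j).

End Defs.

From mathcomp Require Import all_boot all_order all_algebra.
From mathcomp Require Import reals ring lra.
Set Implicit Arguments. Unset Strict Implicit. Unset Printing Implicit Defensive.
Import Order.TTheory GRing.Theory Num.Theory.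
Local Open Scope ring_scope.

(* Four points of the plane satisfy the affine dependence
     det(p2,p3,p4) p1 - det(p1,p3,p4) p2 + det(p1,p2,p4) p3 - det(p1,p2,p3) p4 = 0,
   with coefficients summing to 0.  Dividing by the product of the three
   determinants through p_i gives the balance
     w_ij (p_i - p_j) + w_ik (p_i - p_k) + w_il (p_i - p_l) = 0,
   which with the symmetry of w and the definition of alpha is the stress
   condition.
   w_ij has the sign of det(p_i,p_j,p_k) det(p_i,p_j,p_l): if it is positive,
   p_k and p_l lie on one side of the line p_i p_j, a supporting line, so p_i p_j
   is a hull edge; if it is negative, the midpoint of p_i p_j is a combination of
   all four points with positive weights, hence interior.
   The three weights at p_i have negative product.  If all are negative, the
   balance writes p_i as a positive combination of the other points, so p_i is
   not extreme, and alpha_i < 0.  If exactly one is negative, the strict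
   triangle inequality applied to the balance gives alpha_i > 0, and p_i lies on
   a hull edge, so it is not interior. *)

Lemma uniq_quad_swap (T : eqType) (x y z w : T) : uniq [:: x; y; z; w] ->
  [/\ uniq [:: y; x; z; w], uniq [:: x; z; y; w] & uniq [:: x; y; w; z]].
Proof.
rewrite /= !inE !negb_or !andbT (eq_sym y x) (eq_sym z y) (eq_sym w z).
by case: (x != y); case: (x != z); case: (x != w); case: (y != z); case: (y != w); case: (z != w).
Qed.

Lemma quad_mem (i j k l : 'I_4) : uniq [:: i; j; k; l] -> forall m, m \in [:: i; j; k; l].
Proof.
move=> U m; suff /subset_cardP/(_ (subset_predT _)) : #|[:: i; j; k; l]| = #|'I_4|.
  by move=> /(_ m); rewrite inE => ->.
by rewrite card_ord (card_uniqP U).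
Qed.

Lemma big_quad (T : Type) (idx : T) (op : Monoid.com_law idx) (i j k l : 'I_4)
    (P : pred 'I_4) (F : 'I_4 -> T) : uniq [:: i; j; k; l] ->
  \big[op/idx]_(m | P m) F m = \big[op/idx]_(m <- [:: i; j; k; l] | P m) F m.
Proof.
move=> U; apply: perm_big; apply: (uniq_perm (index_enum_uniq _) U) => m.
by rewrite mem_index_enum (quad_mem U).
Qed.

Lemma big_quad_neq1 (T : Type) (idx : T) (op : Monoid.com_law idx) (i j k l : 'I_4)
    (F : 'I_4 -> T) : uniq [:: i; j; k; l] ->
  \big[op/idx]_(m | m != i) F m = op (F j) (op (F k) (F l)).
Proof.
move=> U; rewrite (big_quad _ _ _ U) !big_cons big_nil Monoid.mulm1 eqxx /=.
by move: U; rewrite /= !inE !negb_or !andbT !(eq_sym _ i) => /and3P[/and3P[-> -> ->] _ _].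
Qed.

Lemma big_quad_neq2 (T : Type) (idx : T) (op : Monoid.com_law idx) (i j k l : 'I_4)
    (F : 'I_4 -> T) : uniq [:: i; j; k; l] ->
  \big[op/idx]_(m | (m != i) && (m != j)) F m = op (F k) (F l).
Proof.
move=> U; rewrite (big_quad _ _ _ U) !big_cons big_nil Monoid.mulm1 !eqxx /= andbF.
move: U; rewrite /= !inE !negb_or !andbT !(eq_sym _ i) !(eq_sym _ j).
by case/and3P=> /and3P[_ -> ->] /andP[-> ->].
Qed.

Lemma exists_quad_pair (i j : 'I_4) : i != j -> exists k l, uniq [:: i; j; k; l].
Proof.
pose o0 : 'I_4 := @Ordinal 4 0 isT; pose o1 : 'I_4 := @Ordinal 4 1 isT.
pose o2 : 'I_4 := @Ordinal 4 2 isT; pose o3 : 'I_4 := @Ordinal 4 3 isT.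
case: i => -[|[|[|[|//]]]] Hi; case: j => -[|[|[|[|//]]]] Hj // _;
first [ by exists o0, o1 | by exists o0, o2 | by exists o0, o3
      | by exists o1, o2 | by exists o1, o3 | by exists o2, o3 ].
Qed.

Lemma exists_quad (i : 'I_4) : exists j k l, uniq [:: i; j; k; l].
Proof.
have [j ij] : exists j : 'I_4, i != j.
  by case: (altP (i =P ord0)) => [->|i0]; [exists ord_max | exists ord0].
by have [k [l U]] := exists_quad_pair ij; exists j, k, l.
Qed.

Lemma prod3_lt0P (R : realDomainType) (x y z : R) : x * y * z < 0 ->
  [\/ [/\ x < 0, y < 0 & z < 0], [/\ x < 0, 0 < y & 0 < z],
      [/\ 0 < x, y < 0 & 0 < z] | [/\ 0 < x, 0 < y & z < 0]].
Proof.
rewrite -mulrA; have [x0|x0|x0] := ltrgt0P x; last by rewrite x0 mul0r ltxx.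
- rewrite pmulr_rlt0 //; have [y0|y0|y0] := ltrgt0P y; last by rewrite y0 mul0r ltxx.
  + by rewrite pmulr_rlt0 // => z0; apply: Or44.
  + by rewrite nmulr_rlt0 // => z0; apply: Or43.
- rewrite nmulr_rlt0 //; have [y0|y0|y0] := ltrgt0P y; last by rewrite y0 mul0r ltxx.
  + by rewrite pmulr_rgt0 // => z0; apply: Or42.
  + by rewrite nmulr_rgt0 // => z0; apply: Or41.
Qed.

Section Plane.
Variable R : realType.
Implicit Types a b c x y z : pt R.

Lemma det3E a b c :
  det3 a b c = a.1 * (b.2 - c.2) - b.1 * (a.2 - c.2) + c.1 * (a.2 - b.2).
Proof.
rewrite /det3 (expand_det_row _ ord0) !big_ord_recl big_ord0 /cofactor.
rewrite !(expand_det_row _ ord0) !big_ord_recl !big_ord0 /cofactor.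
by rewrite !det_mx11 !mxE /= /bump /=; ring.
Qed.

Lemma det3_swap12 a b c : det3 b a c = - det3 a b c.
Proof. by rewrite !det3E; ring. Qed.

Lemma det3_swap23 a b c : det3 a c b = - det3 a b c.
Proof. by rewrite !det3E; ring. Qed.

Lemma enorm_sqr x : enorm x ^+ 2 = x.1 ^+ 2 + x.2 ^+ 2.
Proof. by rewrite sqr_sqrtr /dot -!expr2 // addr_ge0 ?sqr_ge0. Qed.

Lemma enorm_scale (s : R) x : enorm (s * x.1, s * x.2) = `|s| * enorm x.
Proof.
rewrite /enorm /dot /= -sqrtr_sqr -sqrtrM ?sqr_ge0 //.
by congr Num.sqrt; ring.
Qed.

Lemma distC x y : dist x y = dist y x.
Proof. by rewrite /dist /enorm /dot /psub /=; congr Num.sqrt; ring. Qed.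

Lemma dist_gt0 a b c : det3 a b c != 0 -> 0 < dist a b.
Proof.
apply: contraNT; rewrite -leNgt => le0.
have dab0 : dist a b = 0 by apply/le_anti; rewrite le0 sqrtr_ge0.
have := enorm_sqr (psub a b); rewrite -/(dist a b) dab0 expr0n /= => /esym/eqP.
rewrite paddr_eq0 ?sqr_ge0 // !sqrf_eq0 !subr_eq0 => /andP[/eqP e1 /eqP e2].
by rewrite det3E e1 e2; apply/eqP; ring.
Qed.

Lemma coord1_le_dist x y : `|x.1 - y.1| <= dist x y.
Proof.
by rewrite -sqrtr_sqr ler_sqrt /dot /= ?addr_ge0 -?expr2 ?sqr_ge0 // lerDl sqr_ge0.
Qed.

Lemma coord2_le_dist x y : `|x.2 - y.2| <= dist x y.
Proof.
by rewrite -sqrtr_sqr ler_sqrt /dot /= ?addr_ge0 -?expr2 ?sqr_ge0 // lerDr sqr_ge0.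
Qed.

Lemma det3_dist_le x y b c :
  `|det3 y b c - det3 x b c| <= (`|b.1 - c.1| + `|b.2 - c.2|) * dist x y.
Proof.
have -> : det3 y b c - det3 x b c = (b.2 - c.2) * (y.1 - x.1) - (b.1 - c.1) * (y.2 - x.2).
  by rewrite !det3E; ring.
rewrite [X in _ <= X]mulrDl [X in _ <= X]addrC.
apply: (le_trans (ler_normB _ _)); rewrite !normrM.
by apply: lerD; apply: ler_wpM2l => //; rewrite distC ?coord1_le_dist ?coord2_le_dist.
Qed.

Lemma dot_lt_enorm x y : x.1 * y.2 - x.2 * y.1 != 0 -> dot x y < enorm x * enorm y.
Proof.
move=> cross0; have cross_gt0 : 0 < (x.1 * y.2 - x.2 * y.1) ^+ 2 by rewrite exprn_even_gt0.
have lagrange : (enorm x * enorm y) ^+ 2 = dot x y ^+ 2 + (x.1 * y.2 - x.2 * y.1) ^+ 2.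
  by rewrite exprMn !enorm_sqr /dot; ring.
have := mulr_ge0 (sqrtr_ge0 (dot x x)) (sqrtr_ge0 (dot y y)); rewrite -/(enorm x) -/(enorm y).
nra.
Qed.

Lemma enormD_lt x y : x.1 * y.2 - x.2 * y.1 != 0 ->
  enorm (x.1 + y.1, x.2 + y.2) < enorm x + enorm y.
Proof.
move=> /dot_lt_enorm lt_xy.
have sq : enorm (x.1 + y.1, x.2 + y.2) ^+ 2 = enorm x ^+ 2 + enorm y ^+ 2 + 2 * dot x y.
  by rewrite !enorm_sqr /dot /=; ring.
have := sqrtr_ge0 (dot x x); have := sqrtr_ge0 (dot y y).
have := sqrtr_ge0 (dot (x.1 + y.1, x.2 + y.2) (x.1 + y.1, x.2 + y.2)).
rewrite -!/(enorm _); nra.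
Qed.

Lemma balanced_enorm_sum_gt0 (a b c : R) x y z : 0 < a -> 0 < b -> c < 0 ->
  a * x.1 + b * y.1 + c * z.1 = 0 -> a * x.2 + b * y.2 + c * z.2 = 0 ->
  x.1 * y.2 - x.2 * y.1 != 0 -> 0 < a * enorm x + b * enorm y + c * enorm z.
Proof.
move=> a0 b0 c0 e1 e2 cross0.
have ez : - c * enorm z = enorm (a * x.1 + b * y.1, a * x.2 + b * y.2).
  rewrite -(ltr0_norm c0) -normrN -enorm_scale.
  by congr enorm; congr pair; lra.
have ex : enorm (a * x.1, a * x.2) = a * enorm x by rewrite enorm_scale gtr0_norm.
have ey : enorm (b * y.1, b * y.2) = b * enorm y by rewrite enorm_scale gtr0_norm.
have := @enormD_lt (a * x.1, a * x.2) (b * y.1, b * y.2); rewrite ex ey /= -ez.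
have -> : a * x.1 * (b * y.2) - a * x.2 * (b * y.1) = a * b * (x.1 * y.2 - x.2 * y.1) by ring.
have abc0 : a * b * (x.1 * y.2 - x.2 * y.1) != 0.
  by rewrite !mulf_neq0 // gt_eqF.
move=> /(_ abc0); lra.
Qed.

Lemma halfplane_not_interior (S : pt R -> Prop) a b x : 0 < dist a b ->
  det3 a b x = 0 -> (forall z, S z -> 0 <= det3 a b z) -> ~ interior S x.
Proof.
move=> dab0 abx0 S_half [e [e0 ball_S]].
(* Step from x by e / 2 against the normal (a.2 - b.2, b.1 - a.1) of ab. *)
pose r := e / (2 * dist a b).
have r0 : 0 < r by rewrite divr_gt0 ?mulr_gt0.
pose y : pt R := (x.1 - r * (a.2 - b.2), x.2 - r * (b.1 - a.1)).
have dxy : dist x y = e / 2.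
  rewrite /dist (_ : psub x y = (r * (a.2 - b.2), r * (b.1 - a.1))); last first.
    by rewrite /psub /y /=; congr pair; ring.
  rewrite (enorm_scale r (a.2 - b.2, b.1 - a.1)) gtr0_norm // (_ : enorm _ = dist a b); last first.
    by rewrite /dist /enorm /dot /psub /=; congr Num.sqrt; ring.
  by rewrite /r; field; rewrite gt_eqF.
have : det3 a b y = - (r * dist a b ^+ 2).
  by rewrite /dist enorm_sqr -[RHS]add0r -abx0 !det3E /=; ring.
have := S_half y (ball_S y _); rewrite dxy; have := mulr_gt0 r0 (exprn_gt0 2 dab0); lra.
Qed.

Lemma segment_det3 a b x : segment a b x -> det3 a b x = 0.
Proof. by case=> s [_ ->]; rewrite !det3E /=; ring. Qed.

End Plane.

Lemma sum_complete_edges (V : nmodType) n (h : 'I_n -> 'I_n -> V) :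
  \sum_(e in complete_edges n) (h e.1 e.2 + h e.2 e.1) =
  \sum_i \sum_(j | j != i) h i j.
Proof.
rewrite pair_big_dep big_split /= [RHS](bigID (fun e : 'I_n * 'I_n => (e.1 < e.2)%N)) /=.
congr (_ + _).
  by apply: eq_bigl => e; rewrite inE andb_idl // => /ltn_eqF/negbT; rewrite eq_sym.
rewrite (reindex_inj (h := fun e : 'I_n * 'I_n => (e.2, e.1))) /=; last first.
  by move=> [a b] [c d] /= [-> ->].
by apply: eq_bigl => -[i j]; rewrite inE /= -leqNgt ltn_neqAle.
Qed.

Lemma is_stress_complete (R : realType) n (p : 'I_n -> pt R) (w : 'I_n -> 'I_n -> R)
    (alpha : 'I_n -> R) :
  (forall i j, w i j = w j i) ->
  (forall i, \sum_(j | j != i) w i j * ((p i).1 - (p j).1) = 0) ->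
  (forall i, \sum_(j | j != i) w i j * ((p i).2 - (p j).2) = 0) ->
  (forall i, alpha i = \sum_(j | j != i) w i j * dist (p i) (p j)) ->
  is_stress p (complete_edges n) [set: 'I_n] w alpha.
Proof.
move=> wC bal1 bal2 alphaE v t.
(* The term of edge ij splits into a contribution at i and one at j. *)
pose h i j := w i j * (dot (psub (p i) (p j)) (v i) - dist (p i) (p j) * t i).
rewrite (eq_bigr (fun e => h e.1 e.2 + h e.2 e.1)); last first.
  move=> [i j] _; rewrite /h /= (wC j i) (distC (p j)) /dist /dot /psub /=; ring.
rewrite sum_complete_edges [X in _ + X](eq_bigl xpredT) => [|i]; last exact: in_setT.
rewrite -big_split big1 //= => i _.
have -> : \sum_(j | j != i) h i j = (v i).1 * \sum_(j | j != i) w i j * ((p i).1 - (p j).1)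
    + (v i).2 * \sum_(j | j != i) w i j * ((p i).2 - (p j).2) - alpha i * t i.
  rewrite alphaE !mulr_sumr mulr_suml -!big_split -sumrB /=.
  by apply: eq_bigr => j _; rewrite /h /dot /psub /=; ring.
by rewrite bal1 bal2 !mulr0 !add0r addNr.
Qed.

Section FourPoints.
Variables (R : realType) (p : 'I_4 -> pt R).
Local Notation D a b c := (det3 (p a) (p b) (p c)).

Definition comb4 (a b c d : R) (i j k l : 'I_4) : pt R :=
  (a * (p i).1 + b * (p j).1 + c * (p k).1 + d * (p l).1,
   a * (p i).2 + b * (p j).2 + c * (p k).2 + d * (p l).2).

Lemma convP4 (i j k l : 'I_4) x : uniq [:: i; j; k; l] ->
  conv p x <-> exists a b c d : R,
    [/\ 0 <= a, 0 <= b, 0 <= c & 0 <= d] /\ a + b + c + d = 1 /\ x = comb4 a b c d i j k l.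
Proof.
move=> U; have sum4 F : \sum_m F m = F i + F j + F k + F l :> R.
  by rewrite (big_quad _ _ _ U) !big_cons big_nil /= addr0 !addrA.
split.
- case=> lam [lam_ge0 [lam_sum ->]]; exists (lam i), (lam j), (lam k), (lam l).
  by rewrite -lam_sum /comb4 !sum4.
- case=> a [b [c [d [[a0 b0 c0 d0] [abcd1 ->]]]]].
  move: (U); rewrite /= !inE !negb_or !andbT => /and3P[/and3P[ij ik il] /andP[jk jl] kl].
  pose lam m := if m == i then a else if m == j then b else if m == k then c else d.
  exists lam; split; first by move=> m; rewrite /lam; do ![case: ifP => _].
  rewrite !sum4.
  have [-> -> -> ->] : [/\ lam i = a, lam j = b, lam k = c & lam l = d].
    by rewrite /lam !eqxx !ifN_eqC.
  by [].
Qed.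

Lemma wK4E (i j k l : 'I_4) : uniq [:: i; j; k; l] ->
  wK4 p i j = (D i j k * D i j l)^-1.
Proof. by move=> U; rewrite /wK4 (big_quad_neq2 _ _ U). Qed.

Lemma alphaK4E (i j k l : 'I_4) : uniq [:: i; j; k; l] ->
  alphaK4 p i = wK4 p i j * dist (p i) (p j) + wK4 p i k * dist (p i) (p k)
                + wK4 p i l * dist (p i) (p l).
Proof. by move=> U; rewrite /alphaK4 (big_quad_neq1 _ _ U) /= addrA. Qed.

Lemma wK4C (i j : 'I_4) : wK4 p i j = wK4 p j i.
Proof.
have [<-//|ij] := eqVneq i j; have [k [l U]] := exists_quad_pair ij.
have [U' _ _] := uniq_quad_swap U.
by rewrite (wK4E U) (wK4E U') !(det3_swap12 (p j)) mulrNN.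
Qed.

Hypothesis GP : general_position p.

Lemma quad_det3_neq0 (i j k l : 'I_4) : uniq [:: i; j; k; l] ->
  [/\ D i j k != 0, D i j l != 0, D i k l != 0 & D j k l != 0].
Proof.
rewrite /= !inE !negb_or !andbT => /and3P[/and3P[ij ik il] /andP[jk jl] kl].
by split; apply: GP.
Qed.

Lemma wK4_neq0 (i j : 'I_4) : i != j -> wK4 p i j != 0.
Proof.
move=> /exists_quad_pair[k [l U]]; have [ijk ijl _ _] := quad_det3_neq0 U.
by rewrite (wK4E U) invr_eq0 mulf_neq0.
Qed.

Lemma wK4_cofactors (i j k l : 'I_4) : uniq [:: i; j; k; l] ->
  let P := D i j k * D i j l * D i k l in
  [/\ wK4 p i j = D i k l / P, wK4 p i k = - D i j l / P & wK4 p i l = D i j k / P].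
Proof.
move=> U P; have [ijk ijl ikl _] := quad_det3_neq0 U.
have [_ Uk Ul] := uniq_quad_swap U; have [_ Ukl _] := uniq_quad_swap Ul.
rewrite (wK4E U) (wK4E Uk) (wK4E Ukl) (det3_swap23 _ (p j) (p k)) (det3_swap23 _ (p j) (p l)).
by rewrite (det3_swap23 _ (p k) (p l)) /P; split; field; apply/and3P; split.
Qed.

Lemma wK4_balance (i j k l : 'I_4) : uniq [:: i; j; k; l] ->
  wK4 p i j * ((p i).1 - (p j).1) + wK4 p i k * ((p i).1 - (p k).1)
    + wK4 p i l * ((p i).1 - (p l).1) = 0 /\
  wK4 p i j * ((p i).2 - (p j).2) + wK4 p i k * ((p i).2 - (p k).2)
    + wK4 p i l * ((p i).2 - (p l).2) = 0.
Proof.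
move=> U; have [-> -> ->] := wK4_cofactors U; set P := D i j k * D i j l * D i k l.
have cofactor_sum u v z : D i k l / P * u + - D i j l / P * v + D i j k / P * z
    = (D i k l * u - D i j l * v + D i j k * z) / P by ring.
by split; rewrite cofactor_sum (_ : _ + _ + _ = 0) ?mul0r // !det3E; ring.
Qed.

Lemma wK4_prod_lt0 (i j k l : 'I_4) : uniq [:: i; j; k; l] ->
  wK4 p i j * wK4 p i k * wK4 p i l < 0.
Proof.
move=> U; have [ijk ijl ikl _] := quad_det3_neq0 U.
have [-> -> ->] := wK4_cofactors U; set P := D i j k * D i j l * D i k l.
have P0 : P != 0 by rewrite !mulf_neq0.
have -> : D i k l / P * (- D i j l / P) * (D i j k / P) = - (P ^+ 2)^-1.
  by rewrite /P; field; apply/and3P; split.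
by rewrite oppr_lt0 invr_gt0 exprn_even_gt0.
Qed.

Lemma wK4_stress : is_stress p (complete_edges 4) [set: 'I_4] (wK4 p) (alphaK4 p).
Proof.
have balance i : (\sum_(j | j != i) wK4 p i j * ((p i).1 - (p j).1) = 0) /\
                 (\sum_(j | j != i) wK4 p i j * ((p i).2 - (p j).2) = 0).
  have [j [k [l U]]] := exists_quad i.
  by rewrite !(big_quad_neq1 _ _ U) /= !addrA; apply: wK4_balance.
apply: is_stress_complete => [i j|i|i|i] //.
- exact: wK4C.
- exact: (balance i).1.
- exact: (balance i).2.
Qed.

Lemma conv_halfplane (i j k l : 'I_4) z : uniq [:: i; j; k; l] ->
  0 < D i j k * D i j l -> conv p z -> 0 <= D i j k * det3 (p i) (p j) z.
Proof.
move=> U side /(convP4 _ U) [a [b [c [d [[_ _ c0 d0] [abcd ->]]]]]].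
have -> : det3 (p i) (p j) (comb4 a b c d i j k l) = c * D i j k + d * D i j l.
  by rewrite (_ : a = 1 - b - c - d) /comb4 ?det3E /=; [ring | lra].
rewrite mulrDr mulrCA (mulrCA _ d) -expr2.
by apply: addr_ge0; apply: mulr_ge0 => //; [exact: sqr_ge0 | exact: ltW].
Qed.

Lemma hull_edge_of_same_side (i j k l : 'I_4) : uniq [:: i; j; k; l] ->
  0 < D i j k * D i j l -> hull_edge p i j.
Proof.
move=> U side x xij; have [ijk _ _ _] := quad_det3_neq0 U.
have conv_x : conv p x.
  case: xij => s [/andP[s0 s1] ->]; apply/(convP4 _ U); exists (1 - s), s, 0, 0.
  by split; [split; lra | split; [lra | rewrite /comb4; congr pair; ring]].
split.
  move=> e e0; exists x; split => //.
  by rewrite /dist /psub !subrr /enorm /dot /= mul0r addr0 sqrtr0.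
have x_line := segment_det3 xij.
have [Dk0|Dk0|/eqP] := ltrgt0P (D i j k); last by rewrite (negPf ijk).
- apply: (halfplane_not_interior (dist_gt0 ijk) x_line) => z /(conv_halfplane U side).
  by rewrite pmulr_rge0.
- apply: (@halfplane_not_interior _ _ (p j) (p i)).
  + by rewrite distC; apply: dist_gt0 ijk.
  + by rewrite det3_swap12 x_line oppr0.
  + by move=> z /(conv_halfplane U side); rewrite nmulr_rge0 // (det3_swap12 (p i)) oppr_ge0.
Qed.

Lemma interior_comb4 (i j k l : 'I_4) (a b c d : R) : uniq [:: i; j; k; l] ->
  0 < a -> 0 < b -> 0 < c -> 0 < d -> a + b + c + d = 1 ->
  interior (conv p) (comb4 a b c d i j k l).
Proof.
(* Near x, the increments of the barycentric coordinates det3 y p_j p_k / D,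
   det3 y p_k p_i / D, det3 y p_i p_j / D with respect to p_i p_j p_k are small
   (det3 is Lipschitz), so adding them to a, b, c keeps all four weights of y
   nonnegative. *)
move=> U a0 b0 c0 d0 abcd; have [ijk _ _ _] := quad_det3_neq0 U.
set x := comb4 a b c d i j k l; set Dv := D i j k.
pose lip (u v : pt R) := `|u.1 - v.1| + `|u.2 - v.2|.
have lip_ge0 u v : 0 <= lip u v by rewrite addr_ge0.
have ljk := lip_ge0 (p j) (p k); have lki := lip_ge0 (p k) (p i); have lij := lip_ge0 (p i) (p j).
pose K := lip (p j) (p k) + lip (p k) (p i) + lip (p i) (p j) + 1.
have K0 : 0 < K by rewrite /K; lra.
pose m := Num.min a (Num.min b c).
have m0 : 0 < m by rewrite !lt_min a0 b0 c0.
have Dv0 : 0 < `|Dv| by rewrite normr_gt0.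
exists (`|Dv| * m / K); split; first by rewrite divr_gt0 ?mulr_gt0.
move=> y; rewrite ltr_pdivlMr // => dxy.
have coef_ge0 u v e : m <= e -> lip u v <= K -> 0 <= e + (det3 y u v - det3 x u v) / Dv.
  move=> me lipK; set L := _ - _.
  have LDv : `|L| <= `|Dv| * e.
    apply: (le_trans (det3_dist_le x y u v)); rewrite -/(lip u v).
    have dist0 : 0 <= dist x y := sqrtr_ge0 _.
    have := ler_wpM2l (ltW Dv0) me; have := ler_wpM2r dist0 lipK; lra.
  have : `|L / Dv| <= e by rewrite normrM normfV ler_pdivrMr // mulrC.
  by have := ler_norm (- (L / Dv)); rewrite normrN; lra.
apply/(convP4 _ U).
exists (a + (det3 y (p j) (p k) - det3 x (p j) (p k)) / Dv),
  (b + (det3 y (p k) (p i) - det3 x (p k) (p i)) / Dv),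
  (c + (det3 y (p i) (p j) - det3 x (p i) (p j)) / Dv), d.
have lipK : [/\ lip (p j) (p k) <= K, lip (p k) (p i) <= K & lip (p i) (p j) <= K].
  by rewrite /K; split; lra.
have [mKa mKb mKc] : [/\ m <= a, m <= b & m <= c] by rewrite !ge_min !lexx !orbT.
case: lipK => [jk ki ij]; split; first by split; [exact: coef_ge0 | exact: coef_ge0 |
  exact: coef_ge0 | exact: ltW].
have d_eq : d = 1 - a - b - c by lra.
move: ijk; rewrite /x /Dv /comb4 d_eq; case: y {dxy coef_ge0} => y1 y2 ijk.
rewrite !det3E /= in ijk *.
by split; [field | congr pair; field].
Qed.

Lemma not_hull_edge_of_opposite_sides (i j k l : 'I_4) : uniq [:: i; j; k; l] ->
  D i j k * D i j l < 0 -> ~ hull_edge p i j.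
Proof.
move=> U side edge; have [ijk ijl _ _] := quad_det3_neq0 U.
(* ci p_i + cj p_j + ck p_k + cl p_l = 0 with ci + cj + ck + cl = 0; adding
   t ck times this relation to the midpoint of p_i p_j makes all weights
   positive for small t, since ck cl > 0. *)
set ci := D j k l; set cj := - D i k l; set ck := D i j l; set cl := - D i j k.
have ckl : 0 < ck * cl by rewrite /ck /cl mulrN oppr_gt0 mulrC.
pose A := `|ck * ci| + `|ck * cj|.
pose t := (4 * (1 + A))^-1.
have A0 : 0 <= A by rewrite addr_ge0.
have t0 : 0 < t by rewrite invr_gt0 mulr_gt0 //; lra.
have small e : `|e| <= A -> 0 < 1 / 2 + t * e.
  move=> le_e; have t4 : t * (1 + A) = 1 / 4 by rewrite /t; field; lra.
  have := ler_wpM2l (ltW t0) le_e; have := ler_wpM2l (ltW t0) (ler_norm (- e)).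
  rewrite normrN; lra.
have mid : segment (p i) (p j)
    (comb4 (1/2 + t * (ck * ci)) (1/2 + t * (ck * cj)) (t * ck ^+ 2) (t * (ck * cl)) i j k l).
  by exists (1 / 2); split; [lra | rewrite /comb4 /ci /cj /ck /cl !det3E; congr pair; field].
have [_ not_interior] := edge _ mid; apply: not_interior; apply: interior_comb4 => //.
- by apply: small; rewrite /A lerDl.
- by apply: small; rewrite /A lerDr.
- by rewrite mulr_gt0 // exprn_even_gt0.
- by rewrite mulr_gt0.
- by rewrite /ci /cj /ck /cl !det3E; field.
Qed.

Lemma hull_edgeE (i j : 'I_4) : i != j -> hull_edge p i j <-> 0 < wK4 p i j.
Proof.
move=> /exists_quad_pair[k [l U]]; have [ijk ijl _ _] := quad_det3_neq0 U.
rewrite (wK4E U) invr_gt0; split => [edge|]; last exact: hull_edge_of_same_side.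
rewrite ltNge le_eqVlt mulf_eq0 (negPf ijk) (negPf ijl) /=; apply/negP => side.
exact: not_hull_edge_of_opposite_sides U side edge.
Qed.

Lemma not_extreme_of_neg_balance (i j k l : 'I_4) (a b c : R) : uniq [:: i; j; k; l] ->
  a < 0 -> b < 0 -> c < 0 ->
  a * ((p i).1 - (p j).1) + b * ((p i).1 - (p k).1) + c * ((p i).1 - (p l).1) = 0 ->
  a * ((p i).2 - (p j).2) + b * ((p i).2 - (p k).2) + c * ((p i).2 - (p l).2) = 0 ->
  ~ extreme_point (conv p) (p i).
Proof.
move=> U a0 b0 c0 bal1 bal2 [_ extreme]; have [_ _ _ jkl] := quad_det3_neq0 U.
have bc0 : b + c < 0 by lra.
have abc0 : a + b + c < 0 by lra.
have [bc0' abc0'] : b + c != 0 /\ a + b + c != 0 by rewrite !lt_eqF.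
pose q : pt R := ((b * (p k).1 + c * (p l).1) / (b + c), (b * (p k).2 + c * (p l).2) / (b + c)).
pose s := (b + c) / (a + b + c).
have conv_j : conv p (p j).
  apply/(convP4 _ U); exists 0, 1, 0, 0; split; first by split; lra.
  by split; [lra | apply: injective_projections; rewrite /comb4 /=; ring].
have conv_q : conv p q.
  apply/(convP4 _ U); exists 0, 0, (b / (b + c)), (c / (b + c)).
  split; first by split; rewrite // -divrNN divr_ge0 // oppr_ge0 ltW.
  by split; [field | apply: injective_projections; rewrite /comb4 /q /=; field].
have s01 : 0 < s < 1.
  rewrite /s -divrNN divr_gt0 ?oppr_gt0 //= ltr_pdivrMr ?oppr_gt0 // mul1r; lra.
have pi_eq : p i = ((1 - s) * (p j).1 + s * q.1, (1 - s) * (p j).2 + s * q.2).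
  have h1 : (p i).1 = (a * (p j).1 + b * (p k).1 + c * (p l).1) / (a + b + c).
    by apply: (mulIf abc0'); rewrite divfK //; lra.
  have h2 : (p i).2 = (a * (p j).2 + b * (p k).2 + c * (p l).2) / (a + b + c).
    by apply: (mulIf abc0'); rewrite divfK //; lra.
  by apply: injective_projections; rewrite /= ?h1 ?h2 /s /q /=; field; apply/andP.
have pj_q := extreme _ _ _ conv_j conv_q s01 pi_eq.
move: jkl; rewrite pj_q (_ : det3 q (p k) (p l) = 0) ?eqxx //.
by rewrite det3E /q /=; field.
Qed.

Lemma alphaK4_gt0_not_interior (i j k l : 'I_4) : uniq [:: i; j; k; l] ->
  0 < wK4 p i j -> 0 < wK4 p i k -> wK4 p i l < 0 ->
  0 < alphaK4 p i /\ ~ interior (conv p) (p i).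
Proof.
move=> U wj wk wl; have [ijk _ _ _] := quad_det3_neq0 U; have [bal1 bal2] := wK4_balance U.
split.
  rewrite (alphaK4E U).
  apply: (@balanced_enorm_sum_gt0 _ _ _ _ (psub (p i) (p j)) (psub (p i) (p k))
    (psub (p i) (p l)) wj wk wl bal1 bal2).
  by rewrite (_ : _ - _ = D i j k) // det3E /psub /=; ring.
have ij : i != j by case/andP: U; rewrite !inE !negb_or => /andP[].
have edge : hull_edge p i j by apply/hull_edgeE.
have [_ //] : boundary (conv p) (p i).
apply: edge; exists 0; split; first by rewrite lexx ler01.
by apply: injective_projections => /=; ring.
Qed.

Lemma alphaK4_sign (i : 'I_4) :
  (extreme_point (conv p) (p i) -> 0 < alphaK4 p i) /\
  (interior (conv p) (p i) -> alphaK4 p i < 0).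
Proof.
have [j [k [l U]]] := exists_quad i.
have [_ Ukj Ulk] := uniq_quad_swap U; have [_ _ Ulj] := uniq_quad_swap Ukj.
have one_neg j' k' l' : uniq [:: i; j'; k'; l'] ->
    0 < wK4 p i j' -> 0 < wK4 p i k' -> wK4 p i l' < 0 ->
    (extreme_point (conv p) (p i) -> 0 < alphaK4 p i) /\
    (interior (conv p) (p i) -> alphaK4 p i < 0).
  move=> U' wj wk wl; have [pos not_int] := alphaK4_gt0_not_interior U' wj wk wl.
  by split=> // /not_int.
case: (prod3_lt0P (wK4_prod_lt0 U)) => -[wj wk wl];
  [ | exact: one_neg Ulj wk wl wj | exact: one_neg Ulk wj wl wk | exact: one_neg U wj wk wl].
have [bal1 bal2] := wK4_balance U; have [ijk _ _ _] := quad_det3_neq0 U.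
split; first by move/(not_extreme_of_neg_balance U wj wk wl bal1 bal2).
move=> _; rewrite (alphaK4E U).
have dj := dist_gt0 ijk.
have dk : 0 <= dist (p i) (p k) := sqrtr_ge0 _.
have dl : 0 <= dist (p i) (p l) := sqrtr_ge0 _.
nra.
Qed.

End FourPoints.

Theorem mainTheorem16 (R : realType) (p : 'I_4 -> pt R) :
  general_position p ->
  is_stress p (complete_edges 4) [set: 'I_4] (wK4 p) (alphaK4 p) /\
  (forall i j : 'I_4, i != j ->
     (hull_edge p i j -> 0 < wK4 p i j) /\
     (~ hull_edge p i j -> wK4 p i j < 0)) /\
  (forall i : 'I_4,
     (extreme_point (conv p) (p i) -> 0 < alphaK4 p i) /\
     (interior (conv p) (p i) -> alphaK4 p i < 0)).
Proof.
move=> GP; split; first exact: wK4_stress.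
split; last exact: alphaK4_sign.
move=> i j ij; split; first by move/(hull_edgeE GP ij).
by move=> /(hull_edgeE GP ij)/negP; rewrite -leNgt le_eqVlt (negPf (wK4_neq0 GP ij)).
Qed.
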